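(* Fix an integer $b\ge2$, $\gamma\in(0,1)$, let $\phi$ be a real analytic $\mathbb{Z}$-periodic function satisfying condition (H), and assume $\alpha<\min\{1,\frac{\log b}{\log(1/\gamma)}\}$. Then there exist $x_2\in[0,1]$ and $\mathbf{u}\in\Sigma$ with $S'(x_2,\mathbf{u})\neq0$.
   Context: $\Lambda=\{0,\dots,b-1\}$, $\Sigma=\Lambda^{\mathbb{Z}_+}$, $\nu$ uniform on $\Lambda$. $S(x,\mathbf{j})=\sum_{n\ge1}\gamma^{n-1}\phi\big(\frac{x+j_1+j_2b+\cdots+j_nb^{n-1}}{b^n}\big)$ and $S'$ denotes the derivative in $x$. Condition (H): for all $\mathbf{i}\neq\mathbf{j}\in\Sigma$, $x\mapsto S(x,\mathbf{j})-S(x,\mathbf{i})$ is not identically zero. $\alpha$ is the constant such that for Lebesgue-a.e. $x$, the image $m_x$ of $\nu^{\mathbb{Z}_+}$ under $\mathbf{j}\mapsto S(x,\mathbf{j})$ is exact dimensional with dimension $\alpha$. *)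

From HB Require Import structures.
From mathcomp Require Import all_boot all_order all_algebra.
From mathcomp Require Import all_classical all_reals all_analysis.
Unset Printing Implicit Defensive.
Import Order.TTheory GRing.Theory Num.Theory.
Import numFieldNormedType.Exports.
Local Open Scope classical_set_scope.
Local Open Scope ring_scope.

Section Defs.
Context {R : realType}.

(* Sigma = Lambda^{Z_+}, Lambda = {0,...,b-1}; we index coordinates from 0:
   j k is the paper's j_{k+1}. *)
Definition Sigma (b : nat) := nat -> 'I_b.

Definition real_analytic (f : R -> R) : Prop :=
  forall x0 : R, exists2 r : R, 0 < r &
    exists a : nat -> R, forall x : R, `|x - x0| < r ->
      (fun n => \sum_(k < n) a k * (x - x0) ^+ k) @ \oo --> f x.

Definition Zperiodic (f : R -> R) : Prop := forall x : R, f (x + 1) = f x.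

Definition S (b : nat) (gamma : R) (phi : R -> R) (x : R) (j : Sigma b) : R :=
  limn (fun N : nat => \sum_(n < N)
     (gamma ^+ n * phi ((x + \sum_(k < n.+1) ((j k : nat)%:R * (b%:R) ^+ k))
                          / (b%:R) ^+ n.+1))).

Definition condH (b : nat) (gamma : R) (phi : R -> R) : Prop :=
  forall i j : Sigma b, i <> j ->
    ~ (forall x : R, S b gamma phi x j - S b gamma phi x i = 0).

Definition cyl (b : nat) (w : seq 'I_b) : set (Sigma b) :=
  [set j | map j (iota 0 (size w)) = w].

(* null sets for the uniform Bernoulli measure nu^{Z_+} (outer measure 0,
   computed with countable covers by cylinders, [w] having mass b^-|w|) *)
Definition bern_null (b : nat) (N : set (Sigma b)) : Prop :=
  forall eps : R, 0 < eps -> exists ws : nat -> seq 'I_b,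
    N `<=` \bigcup_k cyl b (ws k) /\
    forall n, \sum_(k < n) ((b%:R : R) ^- size (ws k)) <= eps.

(* nu^{Z_+}(U) for an open set U of Sigma: the supremum of the masses of the
   unions of level-n cylinders contained in U (inner regularity by cylinders). *)
Definition bern_open (b : nat) (U : set (Sigma b)) : R :=
  sup (range (fun n : nat =>
    (#|[set w : n.-tuple 'I_b | `[< cyl b (tval w) `<=` U >]]|%:R : R)
      / (b%:R) ^+ n)).

(* m_x(B(y,r)) where m_x is the image of nu^{Z_+} under j |-> S(x,j);
   the preimage of the open ball is open in Sigma *)
Definition mball (b : nat) (gamma : R) (phi : R -> R) (x y r : R) : R :=
  bern_open b [set j : Sigma b | `|S b gamma phi x j - y| < r].

(* m_x is exact dimensional with dimension alpha: for m_x-a.e. y,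
   log m_x(B(y,r)) / log r -> alpha as r -> 0+.  "m_x-a.e. y" means
   nu^{Z_+}-a.e. j for y = S(x,j). *)
Definition exact_dim (b : nat) (gamma : R) (phi : R -> R) (x alpha : R) : Prop :=
  bern_null b [set j : Sigma b |
    ~ ((fun r => ln (mball b gamma phi x (S b gamma phi x j) r) / ln r)
         @ 0^'+ --> alpha)].

End Defs.

From HB Require Import structures.
From mathcomp Require Import all_boot all_order all_algebra.
From mathcomp Require Import all_classical all_reals all_analysis.
From mathcomp Require Import lra zify.
Import Order.TTheory GRing.Theory Num.Theory.
Import numFieldNormedType.Exports.
Local Open Scope classical_set_scope.
Local Open Scope ring_scope.

(* If S'(x, u) vanished for all x in [0, 1] and all u, each S(., u) would be
   constant on [0, 1].  For the constant digit sequence u = d d d ... the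
   self-similarity  S(x, u) = phi((x + d)/b) + gamma S((x + d)/b, u)  then makes
   phi constant on [d/b, (d+1)/b]; so phi is constant on [0, 1], hence on R by
   periodicity, and S(x, j) no longer depends on j, contradicting (H).
   S(., u) is differentiable because phi, being analytic, is C^2: a second-order
   Taylor bound shows that the termwise derivative series is the derivative.
   Only (H) is needed. *)

Section analytic.
Context {R : realType}.

Lemma bernoulli_ineq (d : R) n : 0 <= d -> 1 + n%:R * d <= (1 + d) ^+ n.
Proof.
move=> d0; elim: n => [|n IH]; first by rewrite mul0r addr0 expr0.
rewrite exprS -nat1r mulrDl mul1r.
have h1 : 1 <= (1 + d) ^+ n by rewrite exprn_ege1 // lerDl.
nra.
Qed.

Lemma pseries_diffs_cvg {c : R^nat} {r : R} :
  (forall z, `|z| < r -> cvgn (pseries c z)) ->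
  forall z, `|z| < r -> cvgn (pseries (pseries_diffs c) z).
Proof.
move=> c_cvg z zr; have z_ge0 := normr_ge0 z.
(* With |z| < s < s (1 + d) < r, Bernoulli's inequality absorbs the factor n + 1
   of the differentiated series into (1 + d) ^ (n + 1), leaving a geometric series
   of ratio |z| / s. *)
pose s := (`|z| + r) / 2; pose d := ((s + r) / 2) / s - 1.
have s_gt0 : 0 < s by rewrite /s; lra.
have zs : `|z| < s by rewrite /s; lra.
have d_gt0 : 0 < d by rewrite /d subr_gt0 ltr_pdivlMr // mul1r /s; lra.
have sdr : `|s * (1 + d)| < r.
  by rewrite /d addrC subrK mulrC divfK ?gt_eqF // ger0_norm /s; lra.
clearbody s d.
have [K [_ K_bound]] := cvg_series_bounded (c_cvg _ sdr).
have {}K_bound n : `|c n| * (s ^+ n * (1 + d) ^+ n) <= K + 1.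
  have : `|c n * (s * (1 + d)) ^+ n| <= K + 1 by apply: K_bound => //; lra.
  have sd_ge0 : 0 <= s * (1 + d) by rewrite mulr_ge0 //; lra.
  by rewrite normrM normrX (ger0_norm sd_ge0) exprMn.
have K1 : 0 <= K + 1 by apply: le_trans (K_bound 0%N); rewrite !expr0 !mulr1.
apply: normed_cvg; apply: (series_le_cvg (v_ := geometric ((K + 1) / (d * s)) (`|z| / s))).
- by move=> n /=.
- move=> n; rewrite /geometric /=.
  by rewrite mulr_ge0 ?divr_ge0 ?mulr_ge0 ?exprn_ge0 ?divr_ge0 // ltW.
- move=> n /=; rewrite /geometric /pseries_diffs /= !normrM normr_nat normrX.
  have grow : n.+1%:R * d <= (1 + d) ^+ n.+1.
    by have := bernoulli_ineq d n.+1 (ltW d_gt0); lra.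
  have sn_gt0 : 0 < s ^+ n.+1 by rewrite exprn_gt0.
  have -> : (K + 1) / (d * s) * (`|z| / s) ^+ n = (K + 1) / (d * s ^+ n.+1) * `|z| ^+ n.
    by rewrite expr_div_n exprS !invfM !mulrA mulrAC.
  rewrite ler_wpM2r ?exprn_ge0 // ler_pdivlMr ?mulr_gt0 //.
  have := K_bound n.+1; move: grow.
  set P := (1 + d) ^+ n.+1; set A := `|c n.+1|; set N := n.+1%:R.
  have AS_ge0 : 0 <= A * s ^+ n.+1 by rewrite mulr_ge0 ?normr_ge0 ?exprn_ge0 ?ltW.
  by move=> /(ler_wpM2l AS_ge0); lra.
- apply: is_cvg_geometric_series.
  by rewrite ger0_norm ?divr_ge0 // ?ltW // ltr_pdivrMr // mul1r.
Qed.

Definition psum (c : R^nat) (z : R) : R := limn (pseries c z).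

Lemma is_derive_psum {c : R^nat} {r : R} :
  (forall z, `|z| < r -> cvgn (pseries c z)) ->
  forall z, `|z| < r -> is_derive z (1 : R) (psum c) (psum (pseries_diffs c) z).
Proof.
move=> c_cvg z zr.
have c1 := pseries_diffs_cvg c_cvg; have c2 := pseries_diffs_cvg c1.
pose K := (`|z| + r) / 2.
have K_ge0 : 0 <= K by rewrite /K; have := normr_ge0 z; lra.
have Kr : `|K| < r by rewrite (ger0_norm K_ge0) /K; lra.
have zK : `|z| < `|K| by rewrite (ger0_norm K_ge0) /K; lra.
exact: pseries_snd_diffs (c_cvg _ Kr) (c1 _ Kr) (c2 _ Kr) zK.
Qed.

Lemma is_derive_psum_centered {f : R -> R} {c : R^nat} {r y : R} :
  (forall z, `|z| < r -> cvgn (pseries c z)) ->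
  (forall t, `|t - y| < r -> f t = psum c (t - y)) ->
  forall t, `|t - y| < r -> is_derive t (1 : R) f (psum (pseries_diffs c) (t - y)).
Proof.
move=> c_cvg fE t ty.
apply: (@near_eq_is_derive _ _ _ (fun s => psum c (s - y))).
  near=> s; rewrite fE //.
  have : ball t (r - `|t - y|) s by near: s; apply: nbhsx_ballx; lra.
  rewrite -ball_normE /= => hs.
  have := ler_normD (s - t) (t - y); rewrite addrA subrK (distrC s t); lra.
have := @is_derive1_comp R (psum c) (center y) t (psum (pseries_diffs c) (t - y)) 1.
rewrite mulr1; apply; last exact: is_derive_shift.
exact: is_derive_psum c_cvg _ ty.
Unshelve. all: by end_near.
Qed.

Lemma real_analytic_derivable_iter {f : R -> R} : real_analytic f ->
  forall k (x : R), derivable (iter k (fun g : R -> R => 'D_1 g) f) x 1.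
Proof.
move=> f_an k x; have [r r_gt0 [a a_sum]] := f_an x.
have {}a_sum t : `|t - x| < r -> pseries a (t - x) @ \oo --> f t.
  have -> : pseries a (t - x) = (fun n => \sum_(k < n) a k * (t - x) ^+ k).
    by apply/funext => n; rewrite /pseries /series /= big_mkord.
  exact: a_sum.
have c_cvg z : `|z| < r -> cvgn (pseries a z).
  move=> zr; apply/cvg_ex; exists (f (z + x)).
  by have := a_sum (z + x); rewrite addrK; apply.
have diffs_cvg j z : `|z| < r -> cvgn (pseries (iter j (@pseries_diffs R) a) z).
  by elim: j z => // j IH; exact: pseries_diffs_cvg IH.
have iter_derive_psum j t : `|t - x| < r ->
    iter j (fun g : R -> R => 'D_1 g) f t = psum (iter j (@pseries_diffs R) a) (t - x).
  elim: j t => [|j IH] t tx /=.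
    by rewrite /psum (cvg_lim _ (a_sum t tx)).
  by have [_ ->] := is_derive_psum_centered (diffs_cvg j) IH t tx.
have xx : `|x - x| < r by rewrite subrr normr0.
by have [] := is_derive_psum_centered (diffs_cvg k) (iter_derive_psum k) x xx.
Qed.

End analytic.

Section real_functions.
Context {R : realType}.

Lemma continuous_itv_bounded (f : R -> R) (a b : R) : continuous f ->
  exists M, forall y, a <= y <= b -> `|f y| <= M.
Proof.
move=> f_cont; case: (leP a b) => [ab|ba]; last first.
  by exists 0 => y /andP [ay yb]; have := le_trans ay yb; rewrite leNgt ba.
have nf_cont : continuous (fun y => `|f y|).
  by move=> y; apply: continuous_comp; [exact: f_cont | exact: norm_continuous].
have [c _ c_max] := EVT_max ab (continuous_subspaceT nf_cont).
by exists `|f c| => y yab; apply: c_max; rewrite in_itv.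
Qed.

Lemma MVT_between (f : R -> R) (p q : R) : (forall x, derivable f x 1) ->
  exists2 xi, (p <= xi <= q) || (q <= xi <= p) & f q - f p = 'D_1 f xi * (q - p).
Proof.
move=> f_der.
have f_cont a b : {within `[a, b], continuous f}.
  by apply: derivable_within_continuous => x _; exact: f_der.
have f_is_der (a b x : R) : x \in `]a, b[ -> is_derive x 1 f ('D_1 f x).
  by move=> _; apply: derivableP.
case: (leP p q) => [pq|qp].
  have [xi] := MVT_segment pq (f_is_der p q) (f_cont p q).
  by rewrite in_itv /= => xi_in E; exists xi; rewrite ?xi_in.
have [xi] := MVT_segment (ltW qp) (f_is_der q p) (f_cont q p).
rewrite in_itv /= => xi_in E; exists xi; first by rewrite xi_in orbT.
by rewrite -opprB E -mulrN opprB.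
Qed.

Lemma between_dist {p q xi : R} : (p <= xi <= q) || (q <= xi <= p) ->
  `|xi - p| <= `|q - p|.
Proof.
case/orP => /andP [h1 h2].
  by rewrite !ger0_norm ?subr_ge0 ?(le_trans h1 h2) // lerD2r.
by rewrite !ler0_norm ?subr_le0 ?(le_trans h1 h2) // lerN2 lerD2r.
Qed.

Lemma between_itv {p q xi a b : R} : (p <= xi <= q) || (q <= xi <= p) ->
  a <= p <= b -> a <= q <= b -> a <= xi <= b.
Proof. by case/orP => /andP [? ?] /andP [? ?] /andP [? ?]; apply/andP; split; lra. Qed.

Lemma taylor2_bound {f : R -> R} {a b M : R} :
  (forall x, derivable f x 1) -> (forall x, derivable ('D_1 f) x 1) ->
  (forall x, a <= x <= b -> `|'D_1 ('D_1 f) x| <= M) ->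
  forall y z, a <= y <= b -> a <= z <= b ->
  `|f z - f y - (z - y) * 'D_1 f y| <= M * (z - y) ^+ 2.
Proof.
move=> f_der df_der M_bound y z yab zab.
have [xi yxi ->] := MVT_between f y z f_der.
rewrite (mulrC (z - y)) -mulrBl.
have [eta xieta ->] := MVT_between _ y xi df_der.
rewrite !normrM -(real_normK (num_real (z - y))) expr2 mulrA.
apply: ler_pM; rewrite ?mulr_ge0 //.
apply: ler_pM => //; last exact: between_dist yxi.
exact: M_bound (between_itv xieta yab (between_itv yxi yab zab)).
Qed.

Lemma is_derive_quadratic_remainder (f : R -> R) (x D K : R) :
  (forall h, `|h| <= 1 -> `|f (x + h) - f x - h * D| <= K * h ^+ 2) ->
  is_derive x 1 f D.
Proof.
move=> rem_le.
have K_ge0 : 0 <= K.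
  by have := rem_le 1 ltac:(by rewrite normr1); rewrite expr1n mulr1; apply: le_trans.
have L : (fun h => h^-1 *: ((f \o shift x) (h *: 1) - f x)) @ 0^' --> D.
  apply/cvgrPdist_le => e e_gt0; near=> h.
  have h_neq0 : h != 0 by near: h; exact: nbhs_dnbhs_neq.
  have h_le1 : `|h| <= 1 by near: h; apply: dnbhs0_le.
  have h_small : `|h| <= e / (K + 1) by near: h; apply: dnbhs0_le; rewrite divr_gt0 //; lra.
  rewrite /= /GRing.scale /= mulr1 (addrC h).
  have -> : D - h^-1 * (f (x + h) - f x) = - (h^-1 * (f (x + h) - f x - h * D)).
    by rewrite [in RHS]mulrBr [in RHS]mulrA mulVf // mul1r opprB.
  rewrite normrN normrM normfV ler_pdivrMl ?normr_gt0 //.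
  apply: le_trans (rem_le _ h_le1) _.
  rewrite -real_normK ?num_real // expr2 mulrCA ler_wpM2l //.
  move: h_small; rewrite ler_pdivlMr; last lra.
  by have := normr_ge0 h; nra.
split; [by apply/cvg_ex; exists D | exact: cvg_lim L].
Unshelve. all: by end_near.
Qed.

Lemma derive0_itv_cst (f : R -> R) (a b : R) : (forall x, derivable f x 1) ->
  (forall x, a <= x <= b -> 'D_1 f x = 0) -> forall x, a <= x <= b -> f x = f a.
Proof.
move=> f_der f_D0 x /andP [ax xb].
have [xi axi E] := MVT_between f a x f_der.
apply/eqP; rewrite -subr_eq0 E f_D0 ?mul0r //.
by apply: (between_itv axi); apply/andP; split; rewrite ?lexx //; lra.
Qed.

Lemma cvg_sum_geometric_dom (gamma M : R) (u : R^nat) : 0 < gamma < 1 ->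
  (forall n, `|u n| <= M * gamma ^+ n) -> cvgn (fun N => \sum_(n < N) u n).
Proof.
move=> /andP [g0 g1] u_le.
have M0 : 0 <= M by have := u_le 0%N; rewrite expr0 mulr1; apply: le_trans.
have -> : (fun N => \sum_(n < N) u n) = series u.
  by apply/funext => N; rewrite /series /= big_mkord.
apply: normed_cvg; apply: (series_le_cvg (v_ := geometric M gamma)) => //=.
- by move=> n; rewrite /geometric /= mulr_ge0 // exprn_ge0 // ltW.
- by apply: is_cvg_geometric_series; rewrite gtr0_norm.
Qed.

Lemma norm_sum_geometric_dom (gamma M : R) (u : R^nat) N : 0 < gamma < 1 ->
  (forall n, `|u n| <= M * gamma ^+ n) -> `|\sum_(n < N) u n| <= M / (1 - gamma).
Proof.
move=> /andP [g0 g1] u_le.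
have M0 : 0 <= M by have := u_le 0%N; rewrite expr0 mulr1; apply: le_trans.
apply: le_trans (ler_norm_sum _ _ _) _.
apply: le_trans (_ : \sum_(n < N) M * gamma ^+ n <= _); first exact: ler_sum.
have := @geometric_le_lim R N M gamma M0 g0.
by rewrite gtr0_norm // => /(_ g1); rewrite /series /= big_mkord.
Qed.

Lemma lim_norm_le {u : R^nat} {l K : R} : u @ \oo --> l ->
  (forall n, `|u n| <= K) -> `|l| <= K.
Proof.
move=> ul uK; have normu : `|u n| @[n --> \oo] --> `|l| by apply: cvg_norm.
rewrite -(cvg_lim _ normu) //; apply: limr_le; last exact: nearW.
by apply/cvg_ex; exists `|l|.
Qed.

Lemma cst01_of_cells (f : R -> R) (b : nat) : (0 < b)%N ->
  (forall (d : 'I_b) y, d%:R / b%:R <= y <= d.+1%:R / b%:R -> f y = f (d%:R / b%:R)) ->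
  forall y, 0 <= y <= 1 -> f y = f 0.
Proof.
move=> b_gt0 f_cell.
have b_gt0R : (0 : R) < b%:R by rewrite ltr0n.
suff f_init m : (m < b)%N -> forall y, 0 <= y <= m.+1%:R / b%:R -> f y = f 0.
  move=> y y01; apply: (f_init b.-1); first by rewrite prednK.
  by rewrite prednK // divff ?lt0r_neq0.
elim: m => [|m IH] m_lt y /andP [y_ge0 y_le].
  by rewrite (f_cell (Ordinal m_lt)) /= mul0r // y_ge0.
case: (lerP y (m.+1%:R / b%:R)) => y_m; first by apply: IH; rewrite ?y_ge0 // ltnW.
rewrite (f_cell (Ordinal m_lt)) /= ?(ltW y_m) //.
apply: IH; first exact: ltnW.
by rewrite divr_ge0 ?ler0n // lexx.
Qed.

Lemma Zperiodic_cst_of_cst01 (f : R -> R) : Zperiodic f ->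
  (forall y, 0 <= y <= 1 -> f y = f 0) -> forall y, f y = f 0.
Proof.
move=> f_per f_01 y.
have f_perz (z : R) (k : int) : f (z + k%:~R) = f z.
  have f_pern z' n : f (z' + n%:R) = f z'.
    by elim: n => [|n IH]; rewrite ?addr0 // -natr1 addrA f_per.
  case: k => n; first exact: f_pern.
  by rewrite NegzE mulrNz -pmulrn -(f_pern (z - n.+1%:R) n.+1) subrK.
have /andP [fl_le lt_fl] := floor_itv y.
transitivity (f (y - (Num.floor y)%:~R + (Num.floor y)%:~R)); first by rewrite subrK.
rewrite f_perz f_01 //.
by rewrite intrD in lt_fl; apply/andP; split; lra.
Qed.

End real_functions.

Lemma digits_sum_lt (b m : nat) (u : nat -> 'I_b) :
  (\sum_(k < m) u k * b ^ k < b ^ m)%N.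
Proof.
elim: m => [|m IH]; first by rewrite big_ord0 expn0.
rewrite big_ord_recr /= expnS.
have := ltn_ord (u m); move: IH; set s := (\sum_(_ < _) _)%N; set P := (b ^ m)%N.
by move=> *; nia.
Qed.

Section weierstrass_sum.
Context {R : realType}.
Context {b : nat} {gamma : R} {phi : R -> R}.
Hypothesis b_ge2 : (2 <= b)%N.

Let b_gt0 : 0 < (b%:R : R).
Proof. by rewrite ltr0n (leq_trans _ b_ge2). Qed.

Definition prefix_val (u : Sigma b) n : R := \sum_(k < n.+1) (u k : nat)%:R * b%:R ^+ k.

(* The inverse branch of x |-> b^(n+1) x mod 1 selected by the first n + 1 digits of u. *)
Definition branch (u : Sigma b) n (x : R) : R := (x + prefix_val u n) / b%:R ^+ n.+1.

Lemma S_branchE (u : Sigma b) x :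
  S b gamma phi x u = limn (fun N => \sum_(n < N) gamma ^+ n * phi (branch u n x)).
Proof. by []. Qed.

Lemma expr_b_ge1 n : 1 <= (b%:R : R) ^+ n.
Proof. by rewrite exprn_ege1 // ler1n (leq_trans _ b_ge2). Qed.

Lemma expr_b_gt0 n : 0 < (b%:R : R) ^+ n.
Proof. exact: lt_le_trans (expr_b_ge1 n). Qed.

Lemma prefix_val_bounds u n : 0 <= prefix_val u n /\ prefix_val u n + 1 <= b%:R ^+ n.+1.
Proof.
have -> : prefix_val u n = (\sum_(k < n.+1) u k * b ^ k)%N%:R.
  by rewrite natr_sum; apply: eq_bigr => k _; rewrite natrM natrX.
split; first exact: ler0n.
by rewrite -natrX -[1]/(1%:R) -natrD ler_nat addn1 digits_sum_lt.
Qed.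

Lemma branch_itv (lo hi : R) u n x : lo <= 0 -> 1 <= hi -> lo <= x <= hi ->
  lo <= branch u n x <= hi.
Proof.
move=> lo_le0 hi_ge1 /andP [lox xhi].
have B1 := expr_b_ge1 n.+1; have [p0 p1] := prefix_val_bounds u n.
rewrite /branch ler_pdivlMr ?ler_pdivrMr ?expr_b_gt0 //; apply/andP; split; nra.
Qed.

Lemma branch_itv_norm (c : R) u n x : `|x| <= c -> - c <= branch u n x <= c + 1.
Proof.
move=> xc; have /andP [? ?] : - c <= x <= c by rewrite -ler_norml.
by apply: branch_itv; rewrite ?lerDr ?oppr_le0; [lra | lra | apply/andP; split; lra].
Qed.

Lemma branchD u n x h : branch u n (x + h) - branch u n x = h / b%:R ^+ n.+1.
Proof. by rewrite /branch -mulrBl; congr (_ * _); lra. Qed.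

Lemma branchS u n x :
  branch u n.+1 x = branch (fun k => u k.+1) n (branch u 0 x).
Proof.
rewrite {1 3}/branch.
have -> : prefix_val u n.+1 = (u 0%N : nat)%:R + b%:R * prefix_val (fun k => u k.+1) n.
  rewrite /prefix_val big_ord_recl /= expr0 mulr1 mulr_sumr; congr (_ + _).
  by apply: eq_bigr => i _; rewrite exprS mulrCA.
rewrite {2}/prefix_val big_ord1 expr0 mulr1 expr1 [b%:R ^+ n.+2]exprS invfM mulrA.
by congr (_ / _); rewrite addrA mulrDl [b%:R * _]mulrC mulfK ?lt0r_neq0.
Qed.

Hypotheses (gamma_gt0 : 0 < gamma) (gamma_lt1 : gamma < 1).
Hypothesis phi_cont : continuous phi.

Lemma S_series_cvg u x :
  cvgn (fun N => \sum_(n < N) gamma ^+ n * phi (branch u n x)).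
Proof.
have [M M_bound] := continuous_itv_bounded _ (- `|x|) (`|x| + 1) phi_cont.
apply: (@cvg_sum_geometric_dom _ gamma M (fun n => gamma ^+ n * phi (branch u n x))).
  by rewrite gamma_gt0.
move=> n; rewrite normrM normrX (gtr0_norm gamma_gt0) mulrC.
apply: ler_wpM2r; first by rewrite exprn_ge0 ?ltW.
exact/M_bound/branch_itv_norm.
Qed.

Lemma S_shift u x :
  S b gamma phi x u =
    phi (branch u 0 x) + gamma * S b gamma phi (branch u 0 x) (fun k => u k.+1).
Proof.
rewrite !S_branchE; set v : Sigma b := fun k => u k.+1; set y := branch u 0 x.
suff conv : (fun N => \sum_(n < N) gamma ^+ n * phi (branch u n x)) @ \oo -->
    phi y + gamma * limn (fun N => \sum_(n < N) gamma ^+ n * phi (branch v n y)).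
  by rewrite (cvg_lim _ conv).
rewrite -cvg_shiftS /=.
have -> : (fun N => \sum_(n < N.+1) gamma ^+ n * phi (branch u n x)) =
    (fun N => phi y + gamma * \sum_(n < N) gamma ^+ n * phi (branch v n y)).
  apply/funext => N; rewrite big_ord_recl /= expr0 mul1r mulr_sumr; congr (_ + _).
  by apply: eq_bigr => i _; rewrite branchS exprS mulrA.
by apply: cvgD; [exact: cvg_cst | apply: cvgM; [exact: cvg_cst | exact: S_series_cvg]].
Qed.

Lemma phi_cst_on_cells :
  (forall (u : Sigma b) x, 0 <= x <= 1 -> S b gamma phi x u = S b gamma phi 0 u) ->
  forall (d : 'I_b) y, d%:R / b%:R <= y <= d.+1%:R / b%:R -> phi y = phi (d%:R / b%:R).
Proof.
move=> S_cst d y y_in.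
pose u : Sigma b := fun _ => d.
have d_lt : (d.+1%:R : R) <= b%:R by rewrite ler_nat.
have d_ge0 : (0 : R) <= d%:R := ler0n _ _.
have branch0 x : branch u 0 x = (x + d%:R) / b%:R.
  by rewrite /branch /prefix_val big_ord1 expr0 mulr1 expr1.
have phi_branch x : 0 <= x <= 1 ->
    phi ((x + d%:R) / b%:R) = S b gamma phi 0 u - gamma * S b gamma phi 0 u.
  move=> x01; have := S_shift u x.
  rewrite (S_cst u x x01) (S_cst u (branch u 0 x)) branch0 => [E|].
    by rewrite {1}E addrK.
  rewrite ler_pdivlMr ?ler_pdivrMr // mul0r mul1r; rewrite -natr1 in d_lt.
  by move: x01 => /andP [? ?]; apply/andP; split; lra.
have yb01 : 0 <= y * b%:R - d%:R <= 1.
  move: y_in; rewrite ler_pdivrMr ?ler_pdivlMr // -natr1 => /andP [? ?].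
  by apply/andP; split; lra.
rewrite -[y](mulfK (lt0r_neq0 b_gt0)) -[y * _](subrK d%:R) phi_branch //.
by rewrite -[d%:R in RHS]add0r phi_branch // lexx ler01.
Qed.

Lemma condH_phi_not_cst : condH b gamma phi -> ~ (forall y, phi y = phi 0).
Proof.
move=> phi_H phi_cst.
have b_gt0n : (0 < b)%N by apply: leq_trans b_ge2.
apply: (phi_H (fun _ => Ordinal b_ge2) (fun _ => Ordinal b_gt0n)).
  by move=> /(congr1 (fun j : Sigma b => nat_of_ord (j 0%N))).
have S_cst x (j : Sigma b) :
    S b gamma phi x j = limn (fun N => \sum_(n < N) gamma ^+ n * phi 0).
  rewrite S_branchE; congr (lim (_ @ \oo)); apply/funext => N.
  by apply: eq_bigr => n _; rewrite phi_cst.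
by move=> x; rewrite !S_cst subrr.
Qed.

Hypotheses (phi_der : forall x, derivable phi x 1)
  (dphi_der : forall x, derivable ('D_1 phi) x 1)
  (ddphi_cont : continuous ('D_1 ('D_1 phi))).

Lemma S_deriv_series_cvg u x :
  cvgn (fun N => \sum_(n < N) gamma ^+ n * ('D_1 phi (branch u n x) / b%:R ^+ n.+1)).
Proof.
have dphi_cont : continuous ('D_1 phi).
  by move=> y; apply/differentiable_continuous/derivable1_diffP.
have [M M_bound] := continuous_itv_bounded _ (- `|x|) (`|x| + 1) dphi_cont.
apply: (@cvg_sum_geometric_dom _ gamma M
  (fun n => gamma ^+ n * ('D_1 phi (branch u n x) / b%:R ^+ n.+1))).
  by rewrite gamma_gt0.
move=> n; rewrite normrM normrX (gtr0_norm gamma_gt0) mulrC.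
apply: ler_wpM2r; first by rewrite exprn_ge0 ?ltW.
rewrite normrM normfV (gtr0_norm (expr_b_gt0 _)) ler_pdivrMr ?expr_b_gt0 //.
have M_ge : `|'D_1 phi (branch u n x)| <= M.
  exact/M_bound/branch_itv_norm.
have := expr_b_ge1 n.+1; have := normr_ge0 ('D_1 phi (branch u n x)); nra.
Qed.

Lemma S_is_derive u (x : R) : is_derive x (1 : R) (S b gamma phi ^~ u)
  (limn (fun N => \sum_(n < N) gamma ^+ n * ('D_1 phi (branch u n x) / b%:R ^+ n.+1))).
Proof.
set Ds := fun N => \sum_(n < N) _.
have [M M_bound] := continuous_itv_bounded _ (- (`|x| + 1)) (`|x| + 1 + 1) ddphi_cont.
apply: (@is_derive_quadratic_remainder _ _ _ _ (M / (1 - gamma))) => h h_le1.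
have xh_le : `|x + h| <= `|x| + 1 by apply: le_trans (ler_normD _ _) _; rewrite lerD2l.
have x_le : `|x| <= `|x| + 1 by rewrite lerDl.
have conv : (fun N => \sum_(n < N) gamma ^+ n * phi (branch u n (x + h))
      - \sum_(n < N) gamma ^+ n * phi (branch u n x) - h * Ds N) @ \oo -->
    S b gamma phi (x + h) u - S b gamma phi x u - h * limn Ds.
  apply: cvgB; first by apply: cvgB; exact: S_series_cvg.
  by apply: cvgM; [exact: cvg_cst | exact: S_deriv_series_cvg].
apply: (lim_norm_le conv) => N.
pose a n := branch u n (x + h); pose c n := branch u n x.
pose T n := gamma ^+ n * (phi (a n) - phi (c n) - (a n - c n) * 'D_1 phi (c n)).
have -> : \sum_(n < N) gamma ^+ n * phi (a n) - \sum_(n < N) gamma ^+ n * phi (c n)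
    - h * Ds N = \sum_(n < N) T n.
  rewrite /Ds -sumrB mulr_sumr -sumrB; apply: eq_bigr => n _.
  by rewrite /T branchD; lra.
rewrite mulrAC; apply: (@norm_sum_geometric_dom _ gamma (M * h ^+ 2) T).
  by rewrite gamma_gt0.
move=> n; rewrite /T normrM normrX (gtr0_norm gamma_gt0) mulrC.
apply: ler_wpM2r; first by rewrite exprn_ge0 ?ltW.
apply: le_trans (taylor2_bound phi_der dphi_der M_bound (c n) (a n) _ _) _;
  try exact: branch_itv_norm.
have M_ge0 : 0 <= M := le_trans (normr_ge0 _) (M_bound _ (branch_itv_norm _ u 0 x x_le)).
apply: ler_wpM2l => //.
rewrite /a /c branchD expr_div_n ler_pdivrMr ?exprn_gt0 ?expr_b_gt0 //.
have := sqr_ge0 h; have := exprn_ege1 2 (expr_b_ge1 n.+1); nra.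
Qed.

End weierstrass_sum.

Theorem lemma6p2 (R : realType) (b : nat) (gamma : R) (phi : R -> R) (alpha : R) :
  (2 <= b)%N -> 0 < gamma -> gamma < 1 ->
  real_analytic phi -> Zperiodic phi -> condH b gamma phi ->
  {ae (@lebesgue_measure R), forall x, exact_dim b gamma phi x alpha} ->
  alpha < Num.min 1 (ln (b%:R : R) / ln (gamma^-1)) ->
  exists x2 : R, exists u : Sigma b,
    0 <= x2 <= 1 /\ derivable (fun x => S b gamma phi x u) x2 1 /\
    derive1 (fun x => S b gamma phi x u) x2 != 0.
Proof.
move=> b_ge2 gamma_gt0 gamma_lt1 phi_an phi_per phi_H _ _.
have phi_der := real_analytic_derivable_iter phi_an 0.
have dphi_der := real_analytic_derivable_iter phi_an 1.
have ddphi_cont : continuous ('D_1 ('D_1 phi)).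
  move=> x; apply/differentiable_continuous/derivable1_diffP.
  exact: real_analytic_derivable_iter phi_an 2 x.
have phi_cont : continuous phi.
  by move=> x; apply/differentiable_continuous/derivable1_diffP.
have S_der u x : derivable (S b gamma phi ^~ u) x 1.
  have := S_is_derive b_ge2 gamma_gt0 gamma_lt1 phi_cont phi_der dphi_der ddphi_cont u x.
  by case.
apply: contrapT => no_x2.
have S_D0 u x : 0 <= x <= 1 -> 'D_1 (S b gamma phi ^~ u) x = 0.
  move=> x01; apply: contrapT => D_neq0; apply: no_x2.
  by exists x, u; split => //; split; [exact: S_der | rewrite derive1E; apply/eqP].
apply: (condH_phi_not_cst b_ge2 phi_H); apply: Zperiodic_cst_of_cst01 phi_per _.
apply: (cst01_of_cells phi b (ltnW b_ge2)).
apply: (phi_cst_on_cells b_ge2 gamma_gt0 gamma_lt1 phi_cont) => u x.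
exact: derive0_itv_cst (S_der u) (S_D0 u) x.
Qed.
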